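(* Let $(A,\mu,\alpha,\beta)$ be a BiHom-associative algebra and let $\sigma,\tau,\eta,R:A\to A$ be linear maps such that $\sigma,\tau,\eta$ are algebra maps (multiplicative for $\mu$), $R$ is a $\{\sigma,\tau\}$-Rota-Baxter operator, and any two of the maps $\alpha,\beta,\sigma,\tau,\eta,R$ commute. Define operations on $A$ by $x\prec y=\sigma(x)R(\eta(y))$ and $x\succ y=R(x)\tau(\eta(y))$ for $x,y\in A$. Then $(A,\prec,\succ,\alpha\sigma,\beta\tau\eta)$ is a BiHom-dendriform algebra.
   Context: Work over a field $\Bbbk$; $\mu(x\otimes y)=xy$. A BiHom-associative algebra $(A,\mu,\alpha,\beta)$ consists of a linear space $A$, a bilinear multiplication $\mu$, and linear maps $\alpha,\beta:A\to A$ with $\alpha\beta=\beta\alpha$, $\alpha(xy)=\alpha(x)\alpha(y)$, $\beta(xy)=\beta(x)\beta(y)$ and $\alpha(x)(yz)=(xy)\beta(z)$ for all $x,y,z$. For algebra maps $\sigma,\tau$, a linear map $R$ is a $\{\sigma,\tau\}$-Rota-Baxter operator if $R(\sigma(a))R(\tau(b))=R\big(\sigma(a)R(b)+R(a)\tau(b)\big)$ for all $a,b\in A$. A BiHom-dendriform algebra $(A,\prec,\succ,\alpha',\beta')$ consists of a linear space $A$, bilinear operations $\prec,\succ$, and commuting linear maps $\alpha',\beta'$ that are multiplicative with respect to both $\prec$ and $\succ$, such that for all $x,y,z$: $(x\prec y)\prec\beta'(z)=\alpha'(x)\prec(y\prec z+y\succ z)$; $(x\succ y)\prec\beta'(z)=\alpha'(x)\succ(y\prec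 z)$; $\alpha'(x)\succ(y\succ z)=(x\prec y+x\succ y)\succ\beta'(z)$. *)

From HB Require Import structures.
From mathcomp Require Import all_boot all_order all_algebra.
Set Implicit Arguments. Unset Strict Implicit. Unset Printing Implicit Defensive.
Import GRing.Theory.
Local Open Scope ring_scope.

Definition bilinear_op (K : fieldType) (A : lmodType K) (m : A -> A -> A) :=
  (forall y, linear (fun x => m x y)) /\ (forall x, linear (m x)).

Definition multiplicative_for (A : Type) (m : A -> A -> A) (f : A -> A) :=
  forall x y, f (m x y) = m (f x) (f y).

Definition BiHomAssociative (K : fieldType) (A : lmodType K)
  (mu : A -> A -> A) (alpha beta : {linear A -> A}) :=
  [/\ bilinear_op mu,
      (forall x, alpha (beta x) = beta (alpha x)),
      multiplicative_for mu alpha,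
      multiplicative_for mu beta &
      (forall x y z, mu (alpha x) (mu y z) = mu (mu x y) (beta z))].

Definition RotaBaxter_st (A : zmodType) (mu : A -> A -> A)
  (sigma tau R : A -> A) :=
  forall a b, mu (R (sigma a)) (R (tau b)) =
              R (mu (sigma a) (R b) + mu (R a) (tau b)).

Definition BiHomDendriform (K : fieldType) (A : lmodType K)
  (prec succ : A -> A -> A) (alpha' beta' : A -> A) :=
  [/\ bilinear_op prec /\ bilinear_op succ,
      (forall x, alpha' (beta' x) = beta' (alpha' x)),
      [/\ multiplicative_for prec alpha', multiplicative_for succ alpha',
          multiplicative_for prec beta' & multiplicative_for succ beta'],
      ((forall x y z, prec (prec x y) (beta' z) =
                     prec (alpha' x) (prec y z + succ y z)) /\
      (forall x y z, prec (succ x y) (beta' z) = succ (alpha' x) (prec y z))) &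
      (forall x y z, succ (alpha' x) (succ y z) =
                     succ (prec x y + succ x y) (beta' z))].

Definition pairwise_commute (A : Type) (fs : seq (A -> A)) :=
  forall i j, (i < size fs)%N -> (j < size fs)%N ->
    forall x, nth id fs i (nth id fs j x) = nth id fs j (nth id fs i x).

From HB Require Import structures.
From mathcomp Require Import all_boot all_order all_algebra.
Import GRing.Theory.
Local Open Scope ring_scope.

(* Unfold [x ≺ y = σ x · R η y] and [x ≻ y = R x · τ η y] and move the
   commuting maps past each other; each dendriform identity then follows from
   one application of BiHom-associativity, plus, where a sum [y ≺ z + y ≻ z]
   (resp. [x ≺ y + x ≻ y]) occurs, the Rota-Baxter identity, which folds that
   sum under [R] into a product of two values of [R]. *)

Lemma bilinear_op_twist {K : fieldType} {A : lmodType K} {mu : A -> A -> A}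
    (f g : {linear A -> A}) :
  bilinear_op mu -> bilinear_op (fun x y => mu (f x) (g y)).
Proof.
move=> [mu_linl mu_linr]; split=> [y k u v | x k u v] /=; rewrite linearP.
- exact: mu_linl.
- exact: mu_linr.
Qed.

Section RotaBaxterDendriform.

Variables (K : fieldType) (A : lmodType K) (mu : A -> A -> A).
Variables (alpha beta sigma tau eta R : {linear A -> A}).

Hypothesis alphaM : multiplicative_for mu alpha.
Hypothesis betaM : multiplicative_for mu beta.
Hypothesis sigmaM : multiplicative_for mu sigma.
Hypothesis tauM : multiplicative_for mu tau.
Hypothesis etaM : multiplicative_for mu eta.
Hypothesis mu_biHomA :
  forall x y z, mu (alpha x) (mu y z) = mu (mu x y) (beta z).
Hypothesis R_RotaBaxter : RotaBaxter_st mu sigma tau R.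
Hypothesis maps_commute :
  pairwise_commute [:: (alpha : A -> A); (beta : A -> A); (sigma : A -> A);
                        (tau : A -> A); (eta : A -> A); (R : A -> A)].

(* Every commutation is oriented towards the normal form
   [R (eta (tau (sigma (beta (alpha x)))))]. *)
Let alpha_beta x : alpha (beta x) = beta (alpha x) := maps_commute 0 1 isT isT x.
Let alpha_sigma x : alpha (sigma x) = sigma (alpha x) := maps_commute 0 2 isT isT x.
Let alpha_tau x : alpha (tau x) = tau (alpha x) := maps_commute 0 3 isT isT x.
Let alpha_eta x : alpha (eta x) = eta (alpha x) := maps_commute 0 4 isT isT x.
Let alpha_R x : alpha (R x) = R (alpha x) := maps_commute 0 5 isT isT x.
Let beta_sigma x : beta (sigma x) = sigma (beta x) := maps_commute 1 2 isT isT x.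
Let beta_tau x : beta (tau x) = tau (beta x) := maps_commute 1 3 isT isT x.
Let beta_eta x : beta (eta x) = eta (beta x) := maps_commute 1 4 isT isT x.
Let beta_R x : beta (R x) = R (beta x) := maps_commute 1 5 isT isT x.
Let sigma_tau x : sigma (tau x) = tau (sigma x) := maps_commute 2 3 isT isT x.
Let sigma_eta x : sigma (eta x) = eta (sigma x) := maps_commute 2 4 isT isT x.
Let sigma_R x : sigma (R x) = R (sigma x) := maps_commute 2 5 isT isT x.
Let tau_eta x : tau (eta x) = eta (tau x) := maps_commute 3 4 isT isT x.
Let tau_R x : tau (R x) = R (tau x) := maps_commute 3 5 isT isT x.
Let eta_R x : eta (R x) = R (eta x) := maps_commute 4 5 isT isT x.

Let commuteE :=
  (alpha_beta, alpha_sigma, alpha_tau, alpha_eta, alpha_R,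
   beta_sigma, beta_tau, beta_eta, beta_R, sigma_tau,
   sigma_eta, sigma_R, tau_eta, tau_R, eta_R).

Let multE := (alphaM, betaM, sigmaM, tauM, etaM, linearD).

Local Notation "x ≺ y" := (mu (sigma x) (R (eta y))) (at level 40).
Local Notation "x ≻ y" := (mu (R x) (tau (eta y))) (at level 40).
Local Notation alpha' x := (alpha (sigma x)).
Local Notation beta' x := (beta (tau (eta x))).

Lemma twisted_structure_maps_commute x : alpha' (beta' x) = beta' (alpha' x).
Proof. by rewrite ?commuteE. Qed.

Lemma twisted_structure_maps_multiplicative :
  let prec x y := x ≺ y in let succ x y := x ≻ y in
  [/\ multiplicative_for prec (fun x => alpha' x),
      multiplicative_for succ (fun x => alpha' x),
      multiplicative_for prec (fun x => beta' x) &
      multiplicative_for succ (fun x => beta' x)].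
Proof. by split=> x y; rewrite ?multE ?commuteE. Qed.

Lemma dendriform_prec_prec x y z :
  (x ≺ y) ≺ beta' z = alpha' x ≺ (y ≺ z + y ≻ z).
Proof.
transitivity (mu (mu (sigma (sigma x)) (sigma (R (eta y))))
                 (beta (R (tau (eta (eta z)))))).
  by rewrite ?multE ?commuteE.
rewrite -mu_biHomA.
transitivity (mu (sigma (alpha (sigma x)))
  (R (mu (sigma (eta y)) (R (eta (eta z))) + mu (R (eta y)) (tau (eta (eta z)))))).
  by rewrite -R_RotaBaxter ?multE ?commuteE.
by rewrite ?multE ?commuteE.
Qed.

Lemma dendriform_succ_prec x y z :
  (x ≻ y) ≺ beta' z = alpha' x ≻ (y ≺ z).
Proof.
transitivity (mu (mu (sigma (R x)) (sigma (tau (eta y))))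
                 (beta (R (tau (eta (eta z)))))).
  by rewrite ?multE ?commuteE.
by rewrite -mu_biHomA ?multE ?commuteE.
Qed.

Lemma dendriform_succ_succ x y z :
  alpha' x ≻ (y ≻ z) = (x ≺ y + x ≻ y) ≻ beta' z.
Proof.
transitivity (mu (alpha (R (sigma x)))
                 (mu (R (tau (eta y))) (tau (eta (tau (eta z)))))).
  by rewrite ?multE ?commuteE.
by rewrite mu_biHomA R_RotaBaxter ?multE ?commuteE.
Qed.

End RotaBaxterDendriform.

Arguments twisted_structure_maps_commute {K A alpha beta sigma tau eta R}.

Theorem mainTheorem4 (K : fieldType) (A : lmodType K) (mu : A -> A -> A)
  (alpha beta sigma tau eta R : {linear A -> A}) :
  BiHomAssociative mu alpha beta ->
  multiplicative_for mu sigma ->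
  multiplicative_for mu tau ->
  multiplicative_for mu eta ->
  RotaBaxter_st mu sigma tau R ->
  pairwise_commute [:: (alpha : A -> A); (beta : A -> A); (sigma : A -> A);
                        (tau : A -> A); (eta : A -> A); (R : A -> A)] ->
  BiHomDendriform
    (fun x y => mu (sigma x) (R (eta y)))
    (fun x y => mu (R x) (tau (eta y)))
    (fun x => alpha (sigma x))
    (fun x => beta (tau (eta x))).
Proof.
move=> [mu_bilinear _ alphaM betaM mu_biHomA] sigmaM tauM etaM R_RotaBaxter
  maps_commute.
split.
- split; [exact: (bilinear_op_twist sigma (R \o eta) mu_bilinear) |
           exact: (bilinear_op_twist R (tau \o eta) mu_bilinear)].
- exact: twisted_structure_maps_commute maps_commute.
- by apply: twisted_structure_maps_multiplicative.
- by split; [apply: dendriform_prec_prec | apply: dendriform_succ_prec].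
- by apply: dendriform_succ_succ.
Qed.
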